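(* Let $m\ge1$, $q=2^m$, let $n$ be even, and let $L(x)=ax^{2^k}+bx^{2^l}$ with $a,b\in\mathbb F_{q^n}$ and integers $0\le k<l<mn$, such that $L$ is nonzero as a map on $\mathbb F_{q^n}$. Let $d=\gcd(l-k,mn)$, $e=\gcd(l-k,2m)$ and $\delta=a^{q^2}b+ab^{q^2}$. Then $\mathrm{Tr}(x^{q+1})+L(x)$ is a permutation polynomial of $\mathbb F_{q^n}$ if and only if $a^{\frac{q^n-1}{2^d-1}}\ne b^{\frac{q^n-1}{2^d-1}}$ and one of the following holds: (1) $l-k\equiv m\pmod{2m}$, $a\notin\mathbb F_{q^2}$, $\delta\ne0$ and \[\delta^q\big(a^{q^2}+a\big)+\delta\big(b^{q^3}+b^q\big)=\delta^q\big(b^{q^2}+b\big)+\delta\big(a^{q^3}+a^q\big)=0;\] (2) $k\not\equiv l\pmod{2m}$, $a,b\in\mathbb F_{q^2}$ and $a^{\frac{q^2-1}{2^e-1}}\ne b^{\frac{q^2-1}{2^e-1}}$; (3) $k\equiv l\pmod{2m}$ and $a+b\in\mathbb F_{q^2}$.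
   Context: $\mathrm{Tr}$ denotes the trace map of $\mathbb F_{q^n}$ over $\mathbb F_q$. Polynomials are regarded as maps on $\mathbb F_{q^n}$; a permutation polynomial is one inducing a bijection of $\mathbb F_{q^n}$. *)

From HB Require Import structures.
From mathcomp Require Import all_boot all_order all_algebra all_field.
Set Implicit Arguments. Unset Strict Implicit. Unset Printing Implicit Defensive.
Import GRing.Theory.
Local Open Scope ring_scope.

Definition trace_q {F : finFieldType} (q n : nat) (y : F) : F :=
  \sum_(i < n) y ^+ (q ^ i).

Definition in_Fq2 {F : finFieldType} (q : nat) (x : F) : bool :=
  x ^+ (q ^ 2) == x.

Definition linL {F : finFieldType} (a b : F) (k l : nat) (x : F) : F :=
  a * x ^+ (2 ^ k) + b * x ^+ (2 ^ l).

From mathcomp Require Import all_boot all_order all_algebra all_field.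
From mathcomp Require Import cyclic zify ring.
Set Implicit Arguments. Unset Strict Implicit. Unset Printing Implicit Defensive.
Import GRing.Theory.
Local Open Scope ring_scope.

(* Put N(x) = Tr(x^(q+1)).  Since N(x + y) = N(x) + N(y) + Tr(x^q y + x y^q),
   and this polar form vanishes identically in x exactly when y lies in
   F_(q^2) (n being even), N + L permutes F_(q^n) iff L is injective and
   L^-1(F_q) is contained in F_(q^2).  Composing with the automorphism
   y |-> y^(2^k) replaces L by T(u) = a u + b u^(2^r), r = l - k.
   T has a nonzero root iff a/b is a (2^r - 1)-th power, which a primitive
   root turns into a^Ed = b^Ed; the same argument inside F_(q^2) produces
   the exponent Ee.  For u in F_(q^2) with T(u) = c in F_q, raising to the
   power q^2 gives a second equation a^(q^2) u + b^(q^2) u^(2^r) = c, of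
   determinant delta.  If 2m | r, T is multiplication by a + b on F_(q^2);
   if delta = 0 the two equations force a, b into F_(q^2); otherwise
   Cramer's rule gives u = c alpha and u^(2^r) = c beta, which forces
   r = m (mod 2m), alpha^q = beta and beta^q = alpha: these are the two
   displayed equations of case (1). *)

Lemma gcdn_expn_sub1 p a b : (0 < p)%N ->
  gcdn (p ^ a - 1) (p ^ b - 1) = (p ^ gcdn a b - 1)%N.
Proof.
move=> p_gt0; have [s] := ubnP (a + b)%N; elim: s a b => // s IHs a b.
wlog le_ab : a b / (a <= b)%N => [hwlog|].
  case: (leqP a b) => [|/ltnW] le ab_lt; first exact: hwlog.
  by rewrite gcdnC [gcdn a b]gcdnC hwlog // addnC.
case: a le_ab => [|a] le_ab ab_lt; first by rewrite expn0 subnn !gcd0n.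
rewrite -(subnKC le_ab) expnD; set c := (b - a.+1)%N.
have -> : (p ^ a.+1 * p ^ c - 1 = p ^ c * (p ^ a.+1 - 1) + (p ^ c - 1))%N.
  have := expn_gt0 p c; have := expn_gt0 p a.+1; rewrite p_gt0 /=.
  move: (p ^ c)%N (p ^ a.+1)%N => X Y; nia.
by rewrite gcdnMDl gcdnDl IHs //; lia.
Qed.

Lemma dvdn_expn_sub1 p a b : (1 < p)%N ->
  (p ^ a - 1 %| p ^ b - 1)%N = (a %| b)%N.
Proof.
move=> p_gt1; have p_gt0 : (0 < p)%N by lia.
apply/idP/idP => /gcdn_idPl dvd; apply/gcdn_idPl; last by rewrite gcdn_expn_sub1 ?dvd.
move: dvd; rewrite gcdn_expn_sub1 // => eq_sub1; apply: (expnI p_gt1).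
by have := expn_gt0 p (gcdn a b); have := expn_gt0 p a; rewrite p_gt0 /=; lia.
Qed.

Lemma fixed_exprX (R : nzSemiRingType) (x : R) e t : x ^+ e = x -> x ^+ (e ^ t) = x.
Proof. by move=> xe; elim: t => [|t IHt]; rewrite ?expr1 // expnSr exprM IHt. Qed.

Lemma cramer2 (R : comNzRingType) (a b a' b' u v c : R) :
  a * u + b * v = c -> a' * u + b' * v = c ->
  (a * b' - a' * b) * u = c * (b' - b) /\ (a * b' - a' * b) * v = c * (a - a').
Proof.
move=> e e'; split; apply/eqP; rewrite -subr_eq0 -{1}e'; apply/eqP.
  have -> : (a * b' - a' * b) * u - (a' * u + b' * v) * (b' - b) =
    b' * ((a * u + b * v) - (a' * u + b' * v)) by ring.
  by rewrite e e' subrr mulr0.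
have -> : (a * b' - a' * b) * v - (a' * u + b' * v) * (a - a') =
  a' * ((a' * u + b' * v) - (a * u + b * v)) by ring.
by rewrite e e' subrr mulr0.
Qed.

Lemma rows_eq_of_det0 (R : comNzRingType) (a b a' b' u v : R) :
  a * u + b * v = 1 -> a' * u + b' * v = 1 -> a' * b = a * b' -> a' = a /\ b' = b.
Proof.
move=> e e' det0; split; apply/eqP; rewrite -subr_eq0; apply/eqP.
  have -> : a' - a = a' * (a * u + b * v) - a * (a' * u + b' * v) by rewrite e e' !mulr1.
  by rewrite (_ : _ - _ = (a' * b - a * b') * v); [rewrite det0 subrr mul0r | ring].
have -> : b' - b = b' * (a * u + b * v) - b * (a' * u + b' * v) by rewrite e e' !mulr1.
by rewrite (_ : _ - _ = (a * b' - a' * b) * u); [rewrite det0 subrr mul0r | ring].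
Qed.

Section FinFieldRoots.

Variable F : finFieldType.
Local Notation Q := #|F|.-1.

Lemma expf_card_pred (x : F) : x != 0 -> x ^+ Q = 1.
Proof.
move=> x0; apply: (mulfI x0); rewrite mulr1 -exprS prednK ?expf_card //.
exact: ltnW (finNzRing_gt1 F).
Qed.

Lemma finField_prim_root T : (T %| Q)%N -> exists h : F, T.-primitive_root h.
Proof.
move=> dvT; suff [w w_prim] : exists w : F, Q.-primitive_root w.
  by exists (w ^+ (Q %/ T)); exact: dvdn_prim_root.
have : has Q.-primitive_root (enum (predC1 (0 : F))).
  apply: has_prim_root; last by rewrite -cardE cardC1.
  - by rewrite -subn1 subn_gt0 finNzRing_gt1.
  - by apply/allP => x; rewrite mem_enum unity_rootE => /expf_card_pred ->.
  - exact: enum_uniq.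
by case/hasP => w _; exists w.
Qed.

Lemma prim_root_expr_onto (R : fieldType) T s (h u : R) :
  T.-primitive_root h -> u ^+ (T %/ gcdn s T) = 1 -> exists2 z : R, z ^+ T = 1 & z ^+ s = u.
Proof.
move=> hT uE; have [i ->] := prim_rootP (exp_prim_root hT s) uE.
exists (h ^+ i); last by rewrite -!exprM mulnC.
by rewrite exprAC (prim_expr_order hT) expr1n.
Qed.

Lemma twisted_root_of_exp_eq T s (a b : F) : (T %| Q)%N ->
  a ^+ (T %/ gcdn s T) = b ^+ (T %/ gcdn s T) ->
  exists2 z : F, z != 0 & a * z = b * z ^+ s.+1.
Proof.
move=> dvT abE; have [h hT] := finField_prim_root dvT.
have T_gt0 := prim_order_gt0 hT.
have E_gt0 : (0 < T %/ gcdn s T)%N.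
  by rewrite divn_gt0 ?gcdn_gt0 ?T_gt0 ?orbT // dvdn_leq // dvdn_gcdr.
have [b0|b0] := eqVneq b 0.
  move: abE; rewrite b0 expr0n gtn_eqF // => /eqP; rewrite expf_eq0 E_gt0 /= => /eqP a0.
  by exists 1; rewrite ?oner_neq0 // a0 !mul0r.
have abE1 : (a / b) ^+ (T %/ gcdn s T) = 1 by rewrite expr_div_n abE divff // expf_neq0.
have [z zT zs] := prim_root_expr_onto hT abE1.
have z0 : z != 0.
  by apply: contra_eq_neq zT => ->; rewrite expr0n gtn_eqF // eq_sym oner_neq0.
exists z => //.
by rewrite exprS zs mulrC [b * _]mulrC -mulrA divfK.
Qed.

Lemma exp_eq_of_twisted_root s (a b z : F) : z != 0 -> a * z = b * z ^+ s.+1 ->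
  a ^+ (Q %/ gcdn s Q) = b ^+ (Q %/ gcdn s Q).
Proof.
move=> z0; rewrite exprSr mulrA => /(mulIf z0) ->.
rewrite exprMn -exprM muln_divA ?dvdn_gcdr // -divn_mulAC ?dvdn_gcdl //.
by rewrite mulnC exprM expf_card_pred // expr1n mulr1.
Qed.

Lemma fixed_subfield_dvdn p m j : (1 < p)%N -> (p ^ m - 1 %| Q)%N ->
  (forall c : F, c ^+ (p ^ m) = c -> c ^+ (p ^ j) = c) -> (m %| j)%N.
Proof.
move=> p_gt1 dvT fixj; have [h hT] := finField_prim_root dvT.
have h0 : h != 0 by rewrite (prim_root_eq0 hT) -lt0n (prim_order_gt0 hT).
have hX_sub1 i : (h ^+ (p ^ i - 1) == 1) = (h ^+ (p ^ i) == h).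
  by rewrite -(inj_eq (mulIf h0)) mul1r -exprSr subn1 prednK // expn_gt0; lia.
rewrite -(dvdn_expn_sub1 _ _ p_gt1) (prim_order_dvd hT) hX_sub1.
by apply/eqP/fixj/eqP; rewrite -hX_sub1 -(prim_order_dvd hT).
Qed.

End FinFieldRoots.

Section Trace.

Variables (F : finFieldType) (p m n : nat).
Hypothesis pcharF : p \in [pchar F].
Hypothesis cardF : #|F| = (p ^ (m * n))%N.
Local Notation q := (p ^ m)%N.
Local Notation Tr := (trace_q q n).

Lemma exprDpchar j (x y : F) : (x + y) ^+ (p ^ j) = x ^+ (p ^ j) + y ^+ (p ^ j).
Proof. by apply: exprDn_pchar; rewrite pnatX (pnatE _ (pcharf_prime pcharF)) pcharF. Qed.

Lemma exprDqX j (x y : F) : (x + y) ^+ (q ^ j) = x ^+ (q ^ j) + y ^+ (q ^ j).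
Proof. by rewrite -expnM exprDpchar. Qed.

Lemma exprDq (x y : F) : (x + y) ^+ q = x ^+ q + y ^+ q.
Proof. exact: exprDpchar. Qed.

Lemma q_gt1_n_gt0 : (1 < q)%N /\ (0 < n)%N.
Proof.
have p_gt1 := prime_gt1 (pcharf_prime pcharF).
move: (finNzRing_gt1 F); rewrite cardF.
case: m => [|m']; first by rewrite mul0n.
case: n => [|n']; first by rewrite muln0.
by split=> //; rewrite -{1}(expn0 p) ltn_exp2l.
Qed.

Lemma expr_card_q (x : F) : x ^+ (q ^ n) = x.
Proof. by rewrite -expnM -cardF expf_card. Qed.

Lemma trace_qD (x y : F) : Tr (x + y) = Tr x + Tr y.
Proof. by rewrite /trace_q -big_split; apply: eq_bigr => i _; rewrite exprDqX. Qed.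

Lemma trace_qXq (y : F) : Tr (y ^+ q) = Tr y.
Proof.
rewrite /trace_q; case: n q_gt1_n_gt0 (expr_card_q y) => [[]|n'] // _ yQ.
rewrite big_ord_recr big_ord_recl /= -exprM -expnS yQ expn0 expr1 addrC.
by congr (_ + _); apply: eq_bigr => i _; rewrite -exprM -expnS.
Qed.

Lemma exp_trace_q (y : F) : Tr y ^+ q = Tr y.
Proof.
have fD : {morph (fun x : F => x ^+ q) : x y / x + y} by move=> x z; exact: exprDq.
have f0 : (0 : F) ^+ q = 0 by rewrite expr0n gtn_eqF // ltnW // q_gt1_n_gt0.1.
rewrite -{2}trace_qXq /trace_q (big_morph _ fD f0).
by apply: eq_bigr => i _; rewrite -!exprM mulnC.
Qed.

Lemma trace_qMl (c z : F) : c ^+ q = c -> Tr (c * z) = c * Tr z.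
Proof.
move=> cq; rewrite /trace_q mulr_sumr; apply: eq_bigr => i _.
by rewrite exprMn fixed_exprX.
Qed.

Lemma trace_q_const (c : F) : c ^+ q = c -> Tr c = c *+ n.
Proof.
move=> cq; rewrite /trace_q (eq_bigr (fun=> c)) ?sumr_const ?card_ord // => i _.
exact: fixed_exprX.
Qed.

Lemma trace_q_neq0 : exists z : F, Tr z != 0.
Proof.
have [q_gt1 n_gt0] := q_gt1_n_gt0.
apply/existsP; apply: contraT; rewrite negb_exists => /forallP /= trace0.
pose n' := n.-1; have nE : n = n'.+1 by rewrite prednK.
pose P : {poly F} := \sum_(i < n) 'X^(q ^ i).
have PE z : P.[z] = Tr z.
  by rewrite horner_sum; apply: eq_bigr => i _; rewrite hornerXn.
have lowP : (size (\sum_(i < n') 'X^(q ^ i) : {poly F})%R < size ('X^(q ^ n') : {poly F}))%N.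
  rewrite size_polyXn ltnS; apply: leq_trans (size_sum _ _ _) _.
  by apply/bigmax_leqP => i _; rewrite size_polyXn ltn_exp2l.
have sizeP : size P = (q ^ n').+1.
  by rewrite /P nE big_ord_recr /= addrC size_polyDl // size_polyXn.
have P0 : P != 0 by rewrite -size_poly_eq0 sizeP.
have allP : all (root P) (enum F) by apply/allP => z _; rewrite /root PE; exact: negbNE (trace0 z).
have := max_poly_roots P0 allP (enum_uniq F).
by rewrite -cardE cardF sizeP ltnS expnM nE expnSr leqNgt ltn_Pmulr // expn_gt0 ltnW.
Qed.

Lemma trace_q_onto (c t : F) : c != 0 -> t ^+ q = t -> exists x, Tr (x * c) = t.
Proof.
move=> c0 tq; have [z z0] := trace_q_neq0.
exists (t / Tr z * z / c); rewrite divfK // trace_qMl ?divfK //.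
by rewrite expr_div_n exp_trace_q tq.
Qed.

Lemma trace_q_normD (x y : F) :
  Tr ((x + y) ^+ q.+1) = Tr (x ^+ q.+1) + Tr (y ^+ q.+1) + Tr (x ^+ q * y + x * y ^+ q).
Proof.
rewrite exprSr exprDq -!trace_qD; congr Tr.
by rewrite !exprSr; ring.
Qed.

End Trace.

Section Char2.

Variables (F : finFieldType) (m n : nat).
Hypothesis n_even : ~~ odd n.
Hypothesis cardF : #|F| = (2 ^ (m * n))%N.
Local Notation q := (2 ^ m)%N.
Local Notation Tr := (trace_q q n).
Local Notation Fq2 := (in_Fq2 q).

Lemma pchar2F : 2 \in [pchar F].
Proof. exact: card_finPcharP cardF _. Qed.

Local Notation addxx := (addrr_pchar2 pchar2F).

Lemma m_gt0 : (0 < m)%N.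
Proof. by have := (q_gt1_n_gt0 pchar2F cardF).1; rewrite -{1}(expn0 2) ltn_exp2l. Qed.

Lemma addr_eq0_pchar2 (x y : F) : (x + y == 0) = (x == y).
Proof. by rewrite addr_eq0 (oppr_pchar2 pchar2F). Qed.

Lemma Fq2M (x y : F) : Fq2 x -> Fq2 y -> Fq2 (x * y).
Proof. by move=> /eqP xq /eqP yq; apply/eqP; rewrite exprMn xq yq. Qed.

Lemma Fq2V (x : F) : Fq2 x -> Fq2 x^-1.
Proof. by move=> /eqP xq; apply/eqP; rewrite exprVn xq. Qed.

Lemma Fq2X (x : F) j : Fq2 x -> Fq2 (x ^+ j).
Proof. by move=> /eqP xq; apply/eqP; rewrite exprAC xq. Qed.

Lemma Fq2_Fq (x : F) : x ^+ q = x -> Fq2 x.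
Proof. by move=> xq; apply/eqP; rewrite -mulnn exprM !xq. Qed.

Lemma Fq2_0 : Fq2 (0 : F).
Proof. by apply: Fq2_Fq; rewrite expr0n expn_eq0. Qed.

Lemma Fq2_exp2n_mod (x : F) j : Fq2 x -> x ^+ (2 ^ j) = x ^+ (2 ^ (j %% (2 * m))).
Proof.
rewrite /in_Fq2 -expnM mulnC => /eqP xfix; rewrite {1}(divn_eq j (2 * m)) expnD exprM mulnC.
by rewrite expnM (fixed_exprX _ xfix).
Qed.

Lemma exp2n_inj k : injective (fun x : F => x ^+ (2 ^ k)).
Proof.
move=> x y /= /eqP; rewrite -addr_eq0_pchar2 -(exprDpchar pchar2F) expf_eq0.
by rewrite addr_eq0_pchar2 => /andP[_ /eqP].
Qed.

Lemma Fq2_exp2n (x : F) k : Fq2 (x ^+ (2 ^ k)) = Fq2 x.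
Proof. by rewrite /in_Fq2 exprAC (inj_eq (@exp2n_inj k)). Qed.

Lemma trace_q_norm_Fq2 (y : F) : Fq2 y -> Tr (y ^+ q.+1) = 0.
Proof.
move=> /eqP yq2; rewrite (trace_q_const n); last first.
  by rewrite exprAC exprS -exprM mulnn yq2 -exprSr.
by rewrite -(odd_double_half n) (negbTE n_even) add0n -addnn mulrnDr addxx.
Qed.

Lemma trace_polar_Fq2 (x y : F) : Fq2 y -> Tr (x ^+ q * y + x * y ^+ q) = 0.
Proof.
move=> /eqP yq2; have -> : x ^+ q * y = (x * y ^+ q) ^+ q.
  by rewrite exprMn -exprM mulnn yq2.
by rewrite (trace_qD m n pchar2F) (trace_qXq pchar2F cardF) addxx.
Qed.

Lemma trace_polar_onto (y t : F) : ~~ Fq2 y -> t ^+ q = t ->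
  exists x, Tr (x ^+ q * y + x * y ^+ q) = t.
Proof.
move=> yNq2 tq; set y' := y ^+ (q ^ n.-1).
(* Tr (x^q y) = Tr (x y'), so the form is x |-> Tr (x (y' + y^q)). *)
have y'q : y' ^+ q = y.
  by rewrite -exprM -expnSr prednK ?(q_gt1_n_gt0 pchar2F cardF).2 // (expr_card_q cardF).
have c0 : y' + y ^+ q != 0.
  by apply: contra yNq2; rewrite addr_eq0_pchar2 => /eqP y'E; rewrite /in_Fq2 -mulnn exprM -y'E y'q.
have [x <-] := trace_q_onto pchar2F cardF c0 tq; exists x.
rewrite -{1}y'q -exprMn (trace_qD m n pchar2F) (trace_qXq pchar2F cardF).
by rewrite -(trace_qD m n pchar2F) mulrDr mulrC.
Qed.

Lemma bijective_trace_norm_add (G : F -> F) : {morph G : x y / x + y} ->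
  bijective (fun x => Tr (x ^+ q.+1) + G x) <->
  injective G /\ (forall y, G y ^+ q = G y -> Fq2 y).
Proof.
move=> GD; set f := fun x => _.
have G0 : G 0 = 0 by apply: (addrI (G 0)); rewrite -GD !addr0.
have fD x y : f (x + y) = f x + f y + Tr (x ^+ q * y + x * y ^+ q).
  by rewrite /f (trace_q_normD m n pchar2F) GD; ring.
have f_Fq2 y : Fq2 y -> f y = G y by move=> /trace_q_norm_Fq2; rewrite /f => ->; rewrite add0r.
have f_Fq y : f y ^+ q = f y <-> G y ^+ q = G y.
  by rewrite /f (exprDq m pchar2F) (exp_trace_q pchar2F cardF); split=> [/addrI|->].
have add_eq0 (x y : F) : x + y = 0 -> x = y by move=> /eqP; rewrite addr_eq0_pchar2 => /eqP.
split=> [/bij_inj f_inj | [G_inj GFq2]].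
  have GFq2 y : G y ^+ q = G y -> Fq2 y.
    move=> Gq; apply: contraT => yNq2.
    have [x Bxy] := trace_polar_onto yNq2 ((f_Fq y).2 Gq).
    have : f (x + y) = f (x + 0) by rewrite fD Bxy -addrA addxx !addr0.
    by move/f_inj/addrI => y0; rewrite y0 Fq2_0 in yNq2.
  split=> // y1 y2 Gy; apply: add_eq0.
  have Gy0 : G (y1 + y2) = 0 by rewrite GD Gy addxx.
  have y_Fq2 : Fq2 (y1 + y2) by apply: GFq2; rewrite Gy0 expr0n expn_eq0.
  by apply: f_inj; rewrite !f_Fq2 ?Gy0 ?G0 ?Fq2_0.
apply: injF_bij => x1 x2 fx; set y := x1 + x2.
have x1E : x1 = x2 + y by rewrite /y addrCA addxx addr0.
have fyE : f y = Tr (x2 ^+ q * y + x2 * y ^+ q).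
  by apply: add_eq0; apply: (addrI (f x2)); rewrite addrA -fD -x1E addr0.
have y_Fq2 : Fq2 y by apply/GFq2/(f_Fq y).1; rewrite fyE (exp_trace_q pchar2F cardF).
have : G y = G 0 by rewrite G0 -f_Fq2 // fyE trace_polar_Fq2.
by move/G_inj/add_eq0.
Qed.

Section LinearPart.

Variables a b : F.

Lemma linLD k l : {morph linL a b k l : x y / x + y}.
Proof. by move=> x y; rewrite /linL !(exprDpchar pchar2F); ring. Qed.

Lemma linL_exp2n k l (y : F) : (k <= l)%N ->
  linL a b k l y = linL a b 0 (l - k) (y ^+ (2 ^ k)).
Proof. by move=> le_kl; rewrite /linL expn0 expr1 -exprM -expnD subnKC. Qed.

Lemma linL_injE k l : (k <= l)%N ->
  injective (linL a b k l) <-> injective (linL a b 0 (l - k)).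
Proof.
move=> le_kl; have [root _ frobK] := injF_bij (@exp2n_inj k).
split=> [Linj x y Txy | Tinj x y].
  rewrite -[x]frobK -[y]frobK; congr (_ ^+ _); apply: Linj.
  by rewrite (linL_exp2n (root x)) // (linL_exp2n (root y)) // !frobK.
by rewrite (linL_exp2n x) // (linL_exp2n y) // => /Tinj/exp2n_inj.
Qed.

Lemma linL_Fq2_preimageE k l : (k <= l)%N ->
  (forall y, linL a b k l y ^+ q = linL a b k l y -> Fq2 y) <->
  (forall y, linL a b 0 (l - k) y ^+ q = linL a b 0 (l - k) y -> Fq2 y).
Proof.
move=> le_kl; have [root _ frobK] := injF_bij (@exp2n_inj k).
split=> [LFq2 y | TFq2 y]; last by rewrite (linL_exp2n y) // -(Fq2_exp2n y k); exact: TFq2.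
by rewrite -[y]frobK -(linL_exp2n (root y)) // Fq2_exp2n; exact: LFq2.
Qed.

End LinearPart.

Lemma dvdn_q_card : (q - 1 %| #|F|.-1)%N.
Proof. by rewrite cardF -subn1 dvdn_expn_sub1 // dvdn_mulr. Qed.

Lemma dvdn_q2_card : (q ^ 2 - 1 %| #|F|.-1)%N.
Proof.
rewrite cardF -subn1 -expnM dvdn_expn_sub1 // dvdn_pmul2l ?m_gt0 //.
by rewrite -(odd_double_half n) (negbTE n_even) add0n -muln2 dvdn_mull.
Qed.

Lemma frac_expq_eq (d X Y : F) : d != 0 ->
  ((X / d) ^+ q == Y / d) = (d ^+ q * Y + d * X ^+ q == 0).
Proof.
move=> d0; rewrite expr_div_n eqr_div ?expf_neq0 // addr_eq0_pchar2 eq_sym.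
by rewrite [d * _]mulrC [d ^+ q * _]mulrC.
Qed.

Definition covers_Fq (G : F -> F) := forall c : F, c ^+ q = c -> exists2 u, Fq2 u & G u = c.

Section Twist.

Variables (a b : F) (r : nat).
Local Notation T := (linL a b 0 r).
Local Notation delta := (a ^+ (q ^ 2) * b + a * b ^+ (q ^ 2)).
Local Notation alpha := ((b + b ^+ (q ^ 2)) / delta).
Local Notation beta := ((a + a ^+ (q ^ 2)) / delta).

Lemma linL0E (y : F) : T y = a * y + b * y ^+ (2 ^ r).
Proof. by rewrite /linL expn0 expr1. Qed.

Lemma exp2n_sub1S : (2 ^ r = (2 ^ r - 1).+1)%N.
Proof. by rewrite subn1 prednK // expn_gt0. Qed.

Lemma linL0_exp_neq N : (N %| #|F|.-1)%N -> injective T ->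
  a ^+ (N %/ gcdn (2 ^ r - 1) N) != b ^+ (N %/ gcdn (2 ^ r - 1) N).
Proof.
move=> dvN Tinj; apply/eqP => /(twisted_root_of_exp_eq dvN) [z z0].
rewrite -exp2n_sub1S => azE; move/eqP: z0; apply; apply: Tinj.
by rewrite !linL0E azE addxx expr0n expn_eq0 !mulr0 addr0.
Qed.

Lemma linL0_injP : injective T <->
  a ^+ (#|F|.-1 %/ gcdn (2 ^ r - 1) #|F|.-1) != b ^+ (#|F|.-1 %/ gcdn (2 ^ r - 1) #|F|.-1).
Proof.
split=> [|abE x y Txy]; first exact: linL0_exp_neq.
apply/eqP; rewrite -addr_eq0_pchar2; apply: contraNT abE => xy0; apply/eqP.
have : T (x + y) = 0 by rewrite linLD Txy addxx.
rewrite linL0E => /eqP; rewrite addr_eq0_pchar2 => /eqP azE.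
by apply: (exp_eq_of_twisted_root xy0); rewrite azE -exp2n_sub1S.
Qed.

Lemma Fq2_preimage_covers : injective T ->
  (forall y, T y ^+ q = T y -> Fq2 y) <-> covers_Fq T.
Proof.
move=> Tinj; have [Tinv TK TinvK] := injF_bij Tinj.
split=> [TFq2 c cq | Tcov y Tyq].
  by exists (Tinv c); rewrite ?TinvK //; apply: TFq2; rewrite TinvK.
by have [u uFq2 /Tinj <-] := Tcov _ Tyq.
Qed.

Lemma linL0_expq2 (u : F) : Fq2 u -> T u ^+ (q ^ 2) = a ^+ (q ^ 2) * u + b ^+ (q ^ 2) * u ^+ (2 ^ r).
Proof.
move=> uFq2; rewrite linL0E (exprDqX m pchar2F) !exprMn (eqP uFq2).
by rewrite (eqP (Fq2X _ uFq2)).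
Qed.

Lemma covers_Fq2_add : (2 * m %| r)%N -> covers_Fq T -> Fq2 (a + b).
Proof.
move=> dv_r Tcov; have [u uFq2] := Tcov 1 (expr1n _ _).
rewrite linL0E Fq2_exp2n_mod // (eqP dv_r) expn0 expr1 -mulrDl => abu.
have u0 : u != 0 by apply: contra_eq_neq abu => ->; rewrite mulr0 eq_sym oner_neq0.
have -> : a + b = u^-1 by apply: (mulIf u0); rewrite abu mulVf.
exact: Fq2V.
Qed.

Lemma covers_delta0 : delta = 0 -> covers_Fq T -> Fq2 a /\ Fq2 b.
Proof.
move=> d0 Tcov; have [u uFq2 Tu] := Tcov 1 (expr1n _ _).
have e2 := linL0_expq2 uFq2; rewrite Tu expr1n in e2.
have det0 : a ^+ (q ^ 2) * b = a * b ^+ (q ^ 2) by apply/eqP; rewrite -addr_eq0_pchar2 d0.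
rewrite linL0E in Tu; have [aq2 bq2] := rows_eq_of_det0 Tu (esym e2) det0.
by rewrite /in_Fq2 aq2 bq2 !eqxx.
Qed.

Lemma covers_solution (c u : F) : delta != 0 -> c ^+ q = c -> Fq2 u -> T u = c ->
  u = c * alpha /\ u ^+ (2 ^ r) = c * beta.
Proof.
move=> d0 cq uFq2 Tu; have e2 := linL0_expq2 uFq2.
rewrite Tu (eqP (Fq2_Fq cq)) in e2; rewrite linL0E in Tu.
have [] := cramer2 Tu (esym e2); rewrite !(oppr_pchar2 pchar2F) addrC.
move=> du dv; rewrite [_ + b]addrC in du.
by split; rewrite mulrA -?du -?dv [_ / _]mulrC mulKf.
Qed.

Lemma covers_Fq2_twist : ~~ (2 * m %| r)%N -> delta != 0 -> covers_Fq T ->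
  [/\ (r %% (2 * m) = m)%N, ~~ Fq2 a, alpha ^+ q = beta & beta ^+ q = alpha].
Proof.
move=> r_nmod d0 Tcov; have [u uFq2 Tu] := Tcov 1 (expr1n _ _).
have [uE uvE] := covers_solution d0 (expr1n _ _) uFq2 Tu; rewrite mul1r in uE; rewrite mul1r in uvE.
have alphaFq2 : Fq2 alpha by rewrite -uE.
have alpha_r : alpha ^+ (2 ^ r) = beta by rewrite -uE.
have beta0 : beta != 0.
  apply: contra_eq_neq Tu => beta0; have /eqP : u ^+ (2 ^ r) = 0 by rewrite uvE.
  by rewrite expf_eq0 => /andP[_ /eqP ->]; rewrite linL0E expr0n expn_eq0 !mulr0 addr0 eq_sym oner_neq0.
have fix_r (c : F) : c ^+ q = c -> c ^+ (2 ^ r) = c.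
  move=> cq; have [v vFq2 Tv] := Tcov c cq; have [vE vrE] := covers_solution d0 cq vFq2 Tv.
  by apply: (mulIf beta0); rewrite -vrE vE exprMn alpha_r.
have r_mod : (r %% (2 * m) = m)%N.
  have /dvdnP[t rE] := fixed_subfield_dvdn (isT : (1 < 2)%N) dvdn_q_card fix_r.
  move: r_nmod; rewrite rE /dvdn -muln_modl modn2.
  by case: (odd t); rewrite ?mul0n ?mul1n.
have alpha_q : alpha ^+ q = beta by rewrite -alpha_r (Fq2_exp2n_mod r alphaFq2) r_mod.
split=> //; last by rewrite -alpha_q -exprM mulnn (eqP alphaFq2).
by apply: contra beta0 => /eqP ->; rewrite addxx mul0r.
Qed.

Lemma covers_of_Fq2_add : (2 * m %| r)%N -> Fq2 (a + b) -> a + b != 0 -> covers_Fq T.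
Proof.
move=> dv_r abFq2 ab0 c cq; have uFq2 := Fq2M (Fq2_Fq cq) (Fq2V abFq2).
exists (c / (a + b)) => //.
by rewrite linL0E (Fq2_exp2n_mod r uFq2) (eqP dv_r) expn0 expr1 -mulrDl mulrC divfK.
Qed.

Lemma covers_of_twist : (r %% (2 * m) = m)%N -> delta != 0 ->
  alpha ^+ q = beta -> beta ^+ q = alpha -> covers_Fq T.
Proof.
move=> r_mod d0 alpha_q beta_q c cq.
have alphaFq2 : Fq2 alpha by rewrite /in_Fq2 -mulnn exprM alpha_q beta_q.
have uFq2 := Fq2M (Fq2_Fq cq) alphaFq2.
have ab1 : a * alpha + b * beta = 1.
  rewrite !mulrA -mulrDl (_ : _ + _ = (a * b) *+ 2 + delta); last by ring.
  by rewrite mulr2n addxx add0r divff.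
exists (c * alpha) => //; rewrite linL0E (Fq2_exp2n_mod r uFq2) r_mod exprMn cq alpha_q.
by rewrite mulrCA [b * _]mulrCA -mulrDr ab1 mulr1.
Qed.

Lemma Fq2_preimage_of_Fq2 : Fq2 a -> Fq2 b -> injective T ->
  forall y, T y ^+ q = T y -> Fq2 y.
Proof.
move=> /eqP aq2 /eqP bq2 Tinj y Tyq; apply/eqP/Tinj.
have Tq2 : T y ^+ (q ^ 2) = T y by rewrite -mulnn exprM !Tyq.
by rewrite -Tq2 !linL0E (exprDqX m pchar2F) !exprMn aq2 bq2 exprAC.
Qed.

Lemma alpha_expqE : delta != 0 -> alpha ^+ q = beta <->
  delta ^+ q * (a ^+ (q ^ 2) + a) + delta * (b ^+ (q ^ 3) + b ^+ q) = 0.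
Proof.
move=> d0; rewrite (rwP eqP) frac_expq_eq // [(b + _) ^+ q](exprDq m pchar2F) -exprM -expnSr.
by rewrite [a + _]addrC [b ^+ q + _]addrC; split=> /eqP.
Qed.

Lemma beta_expqE : delta != 0 -> beta ^+ q = alpha <->
  delta ^+ q * (b ^+ (q ^ 2) + b) + delta * (a ^+ (q ^ 3) + a ^+ q) = 0.
Proof.
move=> d0; rewrite (rwP eqP) frac_expq_eq // [(a + _) ^+ q](exprDq m pchar2F) -exprM -expnSr.
by rewrite [b + _]addrC [a ^+ q + _]addrC; split=> /eqP.
Qed.

Lemma Fq2_preimageP : injective T ->
  (forall y, T y ^+ q = T y -> Fq2 y) <->
  [/\ (r %% (2 * m) == m)%N, ~~ Fq2 a, delta != 0,
      delta ^+ q * (a ^+ (q ^ 2) + a) + delta * (b ^+ (q ^ 3) + b ^+ q) = 0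
    & delta ^+ q * (b ^+ (q ^ 2) + b) + delta * (a ^+ (q ^ 3) + a ^+ q) = 0]
  \/ [/\ ~~ (2 * m %| r)%N, Fq2 a, Fq2 b
      & a ^+ ((q ^ 2 - 1) %/ gcdn (2 ^ r - 1) (q ^ 2 - 1))
        != b ^+ ((q ^ 2 - 1) %/ gcdn (2 ^ r - 1) (q ^ 2 - 1))]
  \/ ((2 * m %| r)%N /\ Fq2 (a + b)).
Proof.
move=> Tinj; apply: (iff_trans (Fq2_preimage_covers Tinj)); split=> [Tcov|].
  have [dv_r|ndv_r] := boolP (2 * m %| r)%N.
    by right; right; split=> //; exact: covers_Fq2_add.
  have [d0|d0] := eqVneq delta 0.
    have [aFq2 bFq2] := covers_delta0 d0 Tcov.
    by right; left; split=> //; exact: linL0_exp_neq dvdn_q2_card Tinj.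
  have [r_mod aNFq2 alpha_q beta_q] := covers_Fq2_twist ndv_r d0 Tcov.
  by left; split; rewrite ?r_mod //; [apply/alpha_expqE | apply/beta_expqE].
case=> [[/eqP r_mod _ d0 alpha_q beta_q] | [[_ aFq2 bFq2 _] | [dv_r abFq2]]].
- by apply: covers_of_twist => //; [apply/alpha_expqE | apply/beta_expqE].
- exact/(Fq2_preimage_covers Tinj)/Fq2_preimage_of_Fq2.
apply: covers_of_Fq2_add => //; apply: contra_neq (oner_neq0 F) => ab0; apply: Tinj.
by rewrite !linL0E !expr1n expr0n expn_eq0 !mulr1 !mulr0 addr0.
Qed.

End Twist.

End Char2.

Theorem mainTheorem12 (F : finFieldType) (m n k l : nat) (a b : F) :
  (0 < m)%N -> ~~ odd n -> #|F| = (2 ^ (m * n))%N ->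
  (k < l)%N -> (l < m * n)%N ->
  (exists x : F, linL a b k l x != 0) ->
  let q := (2 ^ m)%N in
  let d := gcdn (l - k) (m * n) in
  let e := gcdn (l - k) (2 * m) in
  let delta := a ^+ (q ^ 2) * b + a * b ^+ (q ^ 2) in
  let Ed := ((q ^ n - 1) %/ (2 ^ d - 1))%N in
  let Ee := ((q ^ 2 - 1) %/ (2 ^ e - 1))%N in
  bijective (fun x : F => trace_q q n (x ^+ (q + 1)) + linL a b k l x) <->
  (a ^+ Ed != b ^+ Ed) /\
  ( [/\ ((l - k) %% (2 * m) == m)%N, ~~ in_Fq2 q a, delta != 0,
        delta ^+ q * (a ^+ (q ^ 2) + a) + delta * (b ^+ (q ^ 3) + b ^+ q) = 0
      & delta ^+ q * (b ^+ (q ^ 2) + b) + delta * (a ^+ (q ^ 3) + a ^+ q) = 0]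
    \/ [/\ (k %% (2 * m) != l %% (2 * m))%N, in_Fq2 q a, in_Fq2 q b
      & a ^+ Ee != b ^+ Ee]
    \/ ((k %% (2 * m) == l %% (2 * m))%N /\ in_Fq2 q (a + b))).
Proof.
move=> _ n_even cardF lt_kl _ _ q d e delta Ed Ee.
have le_kl := ltnW lt_kl.
have EdE : Ed = (#|F|.-1 %/ gcdn (2 ^ (l - k) - 1) #|F|.-1)%N.
  by rewrite cardF -subn1 gcdn_expn_sub1 // /Ed /q -expnM.
have EeE : Ee = ((q ^ 2 - 1) %/ gcdn (2 ^ (l - k) - 1) (q ^ 2 - 1))%N.
  by rewrite /Ee /q -expnM gcdn_expn_sub1 // mulnC.
have TP := @Fq2_preimageP F m n n_even cardF a b (l - k).
rewrite ![(k %% _ == _)%N]eq_sym !(eqn_mod_dvd _ le_kl) EdE EeE addn1.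
split=> [/(bijective_trace_norm_add n_even cardF (linLD cardF a b k l)) [] | [abE cases]].
  move=> /(linL_injE cardF a b le_kl) Tinj /(linL_Fq2_preimageE cardF a b le_kl) TFq2.
  by split; [exact/(linL0_injP cardF) | exact/TP].
have Tinj : injective (linL a b 0 (l - k)) by exact/(linL0_injP cardF).
apply/(bijective_trace_norm_add n_even cardF (linLD cardF a b k l)).
by split; [exact/(linL_injE cardF a b le_kl) | exact/(linL_Fq2_preimageE cardF a b le_kl)/TP].
Qed.
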